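(* Let $\mathsf{N}_\mathsf{F}:=\mathsf{L}_\mathsf{F}\mathsf{K}_\mathsf{F}$ be a system of $N=L+K$ local fermionic modes, with the Jordan–Wigner isomorphism $J$ defined by an ordering in which the $L$ modes of $\mathsf{L}_\mathsf{F}$ come first. Let $\mathcal{C}$ be a fermionic transformation from $\mathsf{N}_\mathsf{F}$ to $\mathsf{N}_\mathsf{F}$ with a single Kraus operator $C$ such that $J(C)=U\otimes I_{\mathsf{K}_\mathsf{F}}$, where $U$ acts on the first $L$ qubits and $I_{\mathsf{K}_\mathsf{F}}$ is the identity on the last $K$ qubits. Then $\mathcal{C}$ is local on the first $L$ modes, i.e. $C$ is a linear combination of products of field operators of the modes of $\mathsf{L}_\mathsf{F}$ only.
   Context: A system of $N$ local fermionic modes is described by field operators $\varphi_1,\dots,\varphi_N$ with $\{\varphi_i,\varphi_j^\dagger\}=\delta_{ij}I$, $\{\varphi_i,\varphi_j\}=0$. Given an ordering of the modes, the Jordan–Wigner isomorphism identifies the Fock basis $(\varphi_1^\dagger)^{n_1}\cdots(\varphi_N^\dagger)^{n_N}|\Omega\rangle$ with the computational basis of $N$ qubits, with $J(\varphi_i)=(\bigotimes_{l<i}\sigma^z_l)\otimes\sigma^-_i\otimes(\bigotimes_{k>i}I_k)$, extended linearly and multiplicatively with $J(X^\dagger)=J(X)^\dagger$. Fermionic transformations are completely positive maps whose Kraus operators each are linear combinations of products of field operators with either all an even or all an odd number of factors. *)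

(* Jordan-Wigner representation of N fermionic modes on
   N qubits, with complex-like scalars (any numClosedFieldType, e.g. C). *)
From HB Require Import structures.
From mathcomp Require Import all_boot all_order all_algebra.
From mathcomp Require Import mxtens.
Set Implicit Arguments. Unset Strict Implicit. Unset Printing Implicit Defensive.
Import Order.TTheory GRing.Theory Num.Theory.
Local Open Scope ring_scope.

Section JW.
Variable Cf : numClosedFieldType.

(* sigma^z = diag(1,-1) and sigma^- = |0><1| (annihilation: |1> -> |0>),
   computational basis |0> = empty, |1> = occupied. *)
Definition sigz : 'M[Cf]_2 := \matrix_(i, j) (if i == j then (-1) ^+ i else 0).
Definition sigm : 'M[Cf]_2 :=
  \matrix_(i, j) (if (val i == 0%N) && (val j == 1%N) then 1 else 0).

Fixpoint kpow (A : 'M[Cf]_2) (n : nat) : 'M[Cf]_(2 ^ n) :=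
  match n return 'M[Cf]_(2 ^ n) with
  | 0 => 1%:M
  | n'.+1 => castmx (esym (expnS 2 n'), esym (expnS 2 n')) (A *t kpow A n')
  end.

Lemma jw_dim (N : nat) (i : 'I_N) : (2 ^ i * 2 * 2 ^ (N - i.+1) = 2 ^ N)%N.
Proof. by rewrite -expnSr -expnD subnKC // ltn_ord. Qed.

(* J(phi_i) = (sigma^z)^{(x) i} (x) sigma^- (x) I^{(x) (N-i-1)}
   (modes 0-indexed; mode 0 is the first / most significant tensor factor) *)
Definition jw_phi (N : nat) (i : 'I_N) : 'M[Cf]_(2 ^ N) :=
  castmx (jw_dim i, jw_dim i)
    ((kpow sigz i *t sigm) *t (1%:M : 'M[Cf]_(2 ^ (N - i.+1)))).

Definition adjmx (n : nat) (A : 'M[Cf]_n) : 'M[Cf]_n := map_mx (fun x => x^*) A^T.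

Definition jw_field (N : nat) (x : 'I_N * bool) : 'M[Cf]_(2 ^ N) :=
  if x.2 then adjmx (jw_phi x.1) else jw_phi x.1.

Definition jw_word (N : nat) (w : seq ('I_N * bool)) : 'M[Cf]_(2 ^ N) :=
  foldr (fun x M => jw_field x *m M) 1%:M w.

Definition lin_comb_of (N : nat) (P : seq ('I_N * bool) -> bool)
    (A : 'M[Cf]_(2 ^ N)) : Prop :=
  exists s : seq (Cf * seq ('I_N * bool)),
    all (fun p => P p.2) s /\ A = \sum_(p <- s) p.1 *: jw_word p.2.

(* Kraus operator of a fermionic transformation: linear combination of products
   of field operators all with an even, or all with an odd number of factors *)
Definition fermionic_kraus (N : nat) (A : 'M[Cf]_(2 ^ N)) : Prop :=
  lin_comb_of (fun w => ~~ odd (size w)) A \/ lin_comb_of (fun w => odd (size w)) A.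

Definition word_on_first (N L : nat) (w : seq ('I_N * bool)) : bool :=
  all (fun x => (val x.1 < L)%N) w.

Definition tens_id (L K : nat) (U : 'M[Cf]_(2 ^ L)) : 'M[Cf]_(2 ^ (L + K)) :=
  castmx (esym (expnD 2 L K), esym (expnD 2 L K)) (U *t (1%:M : 'M[Cf]_(2 ^ K))).

End JW.

(* A field operator of one of the first L modes is mapped by J to J_L(phi_i) (x) I_K,
   where J_L is the Jordan-Wigner map of the first L modes alone. So it suffices that
   the products of field operators of L modes span all 2^L x 2^L matrices: expanding U
   in them and tensoring with I_K expands J(C). The operators phi_0 and phi_0^dagger and their products give the
   matrix units of the first qubit, hence every A (x) I; and
   I (x) J(phi_j) = (sigma^z (x) I) J(phi_(j+1)) on one more mode. *)

From mathcomp Require Import all_boot all_algebra.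
From mathcomp Require Import mxtens.
Import GRing.Theory Num.Theory.
Local Open Scope ring_scope.
Set Implicit Arguments. Unset Strict Implicit.

Section MatrixCasts.
Variable R : pzRingType.

Lemma castmx_mulmx m n (e : (m = n) * (m = n)) (A B : 'M[R]_m) :
  castmx e (A *m B) = castmx e A *m castmx e B.
Proof. by case: e => e e'; case: n / e e' => e'; rewrite [e']eq_axiomK !castmx_id. Qed.

Lemma castmx_scalar m n (e : (m = n) * (m = n)) (a : R) : castmx e a%:M = a%:M.
Proof. by case: e => e e'; case: n / e e' => e'; rewrite [e']eq_axiomK castmx_id. Qed.

Lemma castmxZ m n m' n' (e : (m = m') * (n = n')) a (A : 'M[R]_(m, n)) :
  castmx e (a *: A) = a *: castmx e A.
Proof. by apply/matrixP => i j; rewrite !(castmxE, mxE). Qed.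

Lemma castmx_sum m n m' n' (e : (m = m') * (n = n')) I (r : seq I) P
    (F : I -> 'M[R]_(m, n)) :
  castmx e (\sum_(i <- r | P i) F i) = \sum_(i <- r | P i) castmx e (F i).
Proof.
apply/matrixP => i j; rewrite castmxE !summxE.
by apply: eq_bigr => k _; rewrite castmxE.
Qed.

Lemma castmx_transport (f g : nat -> nat) (F : forall k, 'M[R]_(f k, g k))
    k k' m n (ek : k = k') (e : (f k = m) * (g k = n)) (e' : (f k' = m) * (g k' = n)) :
  castmx e (F k) = castmx e' (F k').
Proof. by case: k' / ek e' => e'; apply: eq_castmx. Qed.

End MatrixCasts.

Section TensorProduct.
Variable R : comPzRingType.

Lemma tensmx_castl m n m' n' p q (e : (m = m') * (n = n'))
    (A : 'M[R]_(m, n)) (B : 'M[R]_(p, q)) :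
  castmx e A *t B = castmx (congr1 (muln^~ p) e.1, congr1 (muln^~ q) e.2) (A *t B).
Proof. by case: e => em en; case: m' / em; case: n' / en; rewrite !castmx_id. Qed.

Lemma tensmx_castr m n p q p' q' (e : (p = p') * (q = q'))
    (A : 'M[R]_(m, n)) (B : 'M[R]_(p, q)) :
  A *t castmx e B = castmx (congr1 (muln m) e.1, congr1 (muln n) e.2) (A *t B).
Proof. by case: e => ep eq; case: p' / ep; case: q' / eq; rewrite !castmx_id. Qed.

Lemma tensmxA m n p q r s (A : 'M[R]_(m, n)) (B : 'M[R]_(p, q)) (C : 'M[R]_(r, s)) :
  A *t B *t C = castmx (mulnA _ _ _, mulnA _ _ _) (A *t (B *t C)).
Proof.
apply/matrixP => i j.
case: (mxtens_indexP i) => i12 i3; case: (mxtens_indexP i12) => i1 i2.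
case: (mxtens_indexP j) => j12 j3; case: (mxtens_indexP j12) => j1 j2.
have assoc_index a b c (x : 'I_a) (y : 'I_b) (z : 'I_c) :
    cast_ord (esym (mulnA a b c)) (mxtens_index (mxtens_index (x, y), z))
    = mxtens_index (x, mxtens_index (y, z)).
  by apply: val_inj; rewrite /= mulnDl -mulnA addnA.
by rewrite castmxE !tensmxE !assoc_index !tensmxE mulrA.
Qed.

Lemma tensmx1 m n : (1%:M : 'M[R]_m) *t (1%:M : 'M[R]_n) = 1%:M.
Proof.
apply/matrixP => i j.
case: (mxtens_indexP i) => i1 i2; case: (mxtens_indexP j) => j1 j2.
rewrite tensmxE !mxE (can_eq (@mxtens_indexK m n)) xpair_eqE.
by case: (i1 == j1); case: (i2 == j2); rewrite ?mulr1 ?mulr0 ?mul0r.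
Qed.

Lemma tensmxZl m n p q a (A : 'M[R]_(m, n)) (B : 'M[R]_(p, q)) :
  (a *: A) *t B = a *: (A *t B).
Proof. by apply/matrixP => i j; rewrite !mxE mulrA. Qed.

Lemma tensmxZr m n p q a (A : 'M[R]_(m, n)) (B : 'M[R]_(p, q)) :
  A *t (a *: B) = a *: (A *t B).
Proof. by apply/matrixP => i j; rewrite !mxE mulrCA. Qed.

Lemma tensmx_suml m n p q I (r : seq I) P (F : I -> 'M[R]_(m, n)) (B : 'M[R]_(p, q)) :
  (\sum_(i <- r | P i) F i) *t B = \sum_(i <- r | P i) F i *t B.
Proof.
apply/matrixP => i j; rewrite [LHS]mxE !summxE mulr_suml.
by apply: eq_bigr => k _; rewrite mxE.
Qed.

Lemma tensmx_sumr m n p q I (r : seq I) P (A : 'M[R]_(m, n)) (F : I -> 'M[R]_(p, q)) :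
  A *t (\sum_(i <- r | P i) F i) = \sum_(i <- r | P i) A *t F i.
Proof.
apply/matrixP => i j; rewrite [LHS]mxE !summxE mulr_sumr.
by apply: eq_bigr => k _; rewrite mxE.
Qed.

Lemma tensmx_delta_sum m n (X : 'M[R]_(m * n)) :
  X = \sum_(a < m) \sum_(b < m) delta_mx a b *t
        (\matrix_(i, j) X (mxtens_index (a, i)) (mxtens_index (b, j)) : 'M_n).
Proof.
apply/matrixP => i j.
case: (mxtens_indexP i) => a0 i'; case: (mxtens_indexP j) => b0 j'.
rewrite summxE (bigD1 a0) //= summxE (bigD1 b0) //= tensmxE !mxE !eqxx mul1r.
rewrite big1 ?addr0 => [|b nb]; last by rewrite tensmxE mxE eqxx eq_sym (negbTE nb) mul0r.
rewrite big1 ?addr0 // => a na; rewrite summxE big1 // => b _.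
by rewrite tensmxE mxE eq_sym (negbTE na) mul0r.
Qed.

End TensorProduct.

Section QubitTensor.
Variable R : comPzRingType.
Variable n : nat.

Definition tens_qubit (A : 'M[R]_2) (B : 'M[R]_(2 ^ n)) : 'M[R]_(2 ^ n.+1) :=
  castmx (esym (expnS 2 n), esym (expnS 2 n)) (A *t B).

Lemma tens_qubit_mul (A C : 'M[R]_2) (B D : 'M[R]_(2 ^ n)) :
  tens_qubit A B *m tens_qubit C D = tens_qubit (A *m C) (B *m D).
Proof. by rewrite -castmx_mulmx tensmx_mul. Qed.

Lemma tens_qubit1 : tens_qubit 1%:M 1%:M = 1%:M.
Proof. by rewrite /tens_qubit tensmx1 castmx_scalar. Qed.

Lemma tens_qubitZr a (A : 'M[R]_2) (B : 'M[R]_(2 ^ n)) :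
  tens_qubit A (a *: B) = a *: tens_qubit A B.
Proof. by rewrite /tens_qubit tensmxZr castmxZ. Qed.

Lemma tens_qubitZl a (A : 'M[R]_2) (B : 'M[R]_(2 ^ n)) :
  tens_qubit (a *: A) B = a *: tens_qubit A B.
Proof. by rewrite /tens_qubit tensmxZl castmxZ. Qed.

Lemma tens_qubit_sumr I (r : seq I) (A : 'M[R]_2) (F : I -> 'M[R]_(2 ^ n)) :
  tens_qubit A (\sum_(i <- r) F i) = \sum_(i <- r) tens_qubit A (F i).
Proof. by rewrite /tens_qubit tensmx_sumr castmx_sum. Qed.

Lemma tens_qubit_suml I (r : seq I) (F : I -> 'M[R]_2) (B : 'M[R]_(2 ^ n)) :
  tens_qubit (\sum_(i <- r) F i) B = \sum_(i <- r) tens_qubit (F i) B.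
Proof. by rewrite /tens_qubit tensmx_suml castmx_sum. Qed.

Lemma tens_qubit_delta_sum (M : 'M[R]_(2 ^ n.+1)) :
  exists B : 'I_2 -> 'I_2 -> 'M[R]_(2 ^ n),
    M = \sum_(a < 2) \sum_(b < 2) tens_qubit (delta_mx a b) (B a b).
Proof.
pose M' := castmx (expnS 2 n, expnS 2 n) M.
exists (fun a b => \matrix_(i, j) M' (mxtens_index (a, i)) (mxtens_index (b, j))).
rewrite -[LHS](castmxK (expnS 2 n) (expnS 2 n)) -/M' [M' in LHS]tensmx_delta_sum.
by rewrite castmx_sum; apply: eq_bigr => a _; rewrite castmx_sum.
Qed.

End QubitTensor.

Section Adjoint.
Variable Cf : numClosedFieldType.

Lemma adjmx_castmx m n (e : (m = n) * (m = n)) (A : 'M[Cf]_m) :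
  adjmx (castmx e A) = castmx e (adjmx A).
Proof. by rewrite /adjmx trmx_cast map_castmx; apply: eq_castmx. Qed.

Lemma adjmx_tens m n (A : 'M[Cf]_m) (B : 'M[Cf]_n) :
  adjmx (A *t B) = adjmx A *t adjmx B.
Proof. by rewrite /adjmx trmx_tens map_mxT. Qed.

Lemma adjmx1 m : adjmx (1%:M : 'M[Cf]_m) = 1%:M.
Proof. by rewrite /adjmx tr_scalar_mx map_scalar_mx rmorph1. Qed.

Lemma adjmx_delta m (i j : 'I_m) : adjmx (delta_mx i j : 'M[Cf]_m) = delta_mx j i.
Proof. by apply/matrixP => k l; rewrite !mxE conjC_nat andbC. Qed.

Lemma adjmx_tens_qubit n (A : 'M[Cf]_2) (B : 'M[Cf]_(2 ^ n)) :
  adjmx (tens_qubit A B) = tens_qubit (adjmx A) (adjmx B).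
Proof. by rewrite adjmx_castmx adjmx_tens. Qed.

End Adjoint.

Section JordanWigner.
Variable Cf : numClosedFieldType.

Lemma sigm_delta : sigm Cf = delta_mx 0 1.
Proof. by apply/matrixP => -[[|[|i]] ?] [[|[|j]] ?]; rewrite !mxE. Qed.

Lemma adjmx_sigz : adjmx (sigz Cf) = sigz Cf.
Proof.
by apply/matrixP => -[[|[|i]] ?] [[|[|j]] ?]; rewrite !mxE //= ?rmorph0 ?rmorph1 ?rmorphN1.
Qed.

Lemma sigz_sqr : sigz Cf *m sigz Cf = 1%:M.
Proof.
apply/matrixP => -[[|[|i]] ?] [[|[|j]] ?]; rewrite !mxE //= !big_ord_recl big_ord0 !mxE /=;
  by rewrite ?(expr0, mulr0, mul0r, addr0, mulr1) // /bump /= expr1 mulrNN mulr1 add0r.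
Qed.

Lemma jw_phi0 n : jw_phi Cf (ord0 : 'I_n.+1) = tens_qubit (sigm Cf) 1%:M.
Proof.
rewrite /jw_phi /tens_qubit /= tens_scalar1mx tensmx_castl castmx_comp.
exact: (castmx_transport (fun k => sigm Cf *t (1%:M : 'M_(2 ^ k))) (subn1 n.+1)).
Qed.

Lemma jw_phi_lift n (j : 'I_n) :
  jw_phi Cf (lift ord0 j) = tens_qubit (sigz Cf) (jw_phi Cf j).
Proof.
rewrite /jw_phi /tens_qubit /= !(tensmxA, tensmx_castl, tensmx_castr, castmx_comp).
by apply: (castmx_transport
   (fun k => sigz Cf *t (kpow (sigz Cf) j *t (sigm Cf *t (1%:M : 'M_(2 ^ k)))))).
Qed.

Lemma jw_phi_widen L K (i : 'I_L) :
  jw_phi Cf (widen_ord (leq_addr K L) i) = tens_id K (jw_phi Cf i).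
Proof.
rewrite /tens_id /jw_phi tensmx_castl castmx_comp [in RHS]tensmxA castmx_comp tensmx1.
apply: (castmx_transport (fun k => kpow (sigz Cf) i *t sigm Cf *t (1%:M : 'M_k))).
by rewrite -expnD /= addnC -addnBA // addnC.
Qed.

Lemma jw_field0 n b :
  jw_field Cf (ord0 : 'I_n.+1, b) =
  tens_qubit (if b then delta_mx 1 0 else delta_mx 0 1) 1%:M.
Proof.
rewrite /jw_field jw_phi0 sigm_delta.
by case: b; rewrite //= adjmx_tens_qubit adjmx_delta adjmx1.
Qed.

Lemma jw_field_lift n (x : 'I_n * bool) :
  jw_field Cf (lift ord0 x.1, x.2) = tens_qubit (sigz Cf) (jw_field Cf x).
Proof.
by rewrite /jw_field jw_phi_lift; case: x.2; rewrite //= adjmx_tens_qubit adjmx_sigz.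
Qed.

End JordanWigner.

Section LinearCombinations.
Variables (Cf : numClosedFieldType) (N : nat).
Implicit Types (w : seq ('I_N * bool)) (A B : 'M[Cf]_(2 ^ N)).

Lemma jw_word_cat w1 w2 : jw_word Cf (w1 ++ w2) = jw_word Cf w1 *m jw_word Cf w2.
Proof. by elim: w1 => [|x w IH] /=; rewrite ?mul1mx // IH mulmxA. Qed.

Variable P : seq ('I_N * bool) -> bool.

Lemma lin_comb_word w : P w -> lin_comb_of P (jw_word Cf w).
Proof. by move=> Pw; exists [:: (1, w)]; rewrite /= Pw big_seq1 scale1r. Qed.

Lemma lin_combZ a A : lin_comb_of P A -> lin_comb_of P (a *: A).
Proof.
move=> [s [Ps ->]]; exists [seq (a * p.1, p.2) | p <- s].
by rewrite all_map big_map scaler_sumr; split=> //; apply: eq_bigr => p _; rewrite scalerA.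
Qed.

Lemma lin_comb_sum (I : eqType) (r : seq I) (F : I -> 'M[Cf]_(2 ^ N)) :
  (forall i, i \in r -> lin_comb_of P (F i)) -> lin_comb_of P (\sum_(i <- r) F i).
Proof.
elim: r => [|i r IH] PF; first by exists [::]; rewrite !big_nil.
rewrite big_cons; have [s [Ps ->]] : lin_comb_of P (F i) by apply: PF; rewrite mem_head.
have [t [Pt ->]] : lin_comb_of P (\sum_(j <- r) F j).
  by apply: IH => j rj; apply: PF; rewrite inE rj orbT.
by exists (s ++ t); rewrite all_cat Ps Pt big_cat.
Qed.

Hypothesis P_cat : forall w1 w2, P w1 -> P w2 -> P (w1 ++ w2).

Lemma lin_comb_mul A B : lin_comb_of P A -> lin_comb_of P B -> lin_comb_of P (A *m B).
Proof.
move=> [s [Ps ->]] [t [Pt ->]].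
rewrite mulmx_suml; apply: lin_comb_sum => p ps.
rewrite mulmx_sumr; apply: lin_comb_sum => q qt.
rewrite -scalemxAl -scalemxAr scalerA -jw_word_cat.
by apply/lin_combZ/lin_comb_word/P_cat; [apply: (allP Ps) | apply: (allP Pt)].
Qed.

End LinearCombinations.

Notation jw_span := (lin_comb_of xpredT).

Section FullSpan.
Variable Cf : numClosedFieldType.

Lemma jw_span_mul n (A B : 'M[Cf]_(2 ^ n)) : jw_span A -> jw_span B -> jw_span (A *m B).
Proof. exact: lin_comb_mul. Qed.

Lemma jw_span1 n : jw_span (1%:M : 'M[Cf]_(2 ^ n)).
Proof. exact: (@lin_comb_word Cf _ _ [::]). Qed.

Lemma jw_span_field n (x : 'I_n * bool) : jw_span (jw_field Cf x).
Proof. by rewrite -[jw_field _ _]mulmx1; exact: (@lin_comb_word Cf _ _ [:: x]). Qed.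

Lemma jw_span_tens_qubitl n (A : 'M[Cf]_2) : jw_span (tens_qubit A (1%:M : 'M_(2 ^ n))).
Proof.
pose I : 'M[Cf]_(2 ^ n) := 1%:M.
have field (b : bool) : jw_span (tens_qubit (if b then delta_mx 1 0 else delta_mx 0 1) I).
  by rewrite -(jw_field0 Cf n); apply: jw_span_field.
have ord2 (i : 'I_2) : i = 0 \/ i = 1.
  by case: i => -[|[|//]] ?; [left | right]; apply: val_inj.
have delta a c : jw_span (tens_qubit (delta_mx a c) I).
  have [->|->] := ord2 a; have [->|->] := ord2 c.
  - rewrite -(@mul_delta_mx _ 2 2 2 1) -[I]mulmx1 -tens_qubit_mul.
    by apply: jw_span_mul; [exact: (field false) | exact: (field true)].
  - exact: (field false).
  - exact: (field true).
  - rewrite -(@mul_delta_mx _ 2 2 2 0) -[I]mulmx1 -tens_qubit_mul.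
    by apply: jw_span_mul; [exact: (field true) | exact: (field false)].
rewrite [A]matrix_sum_delta tens_qubit_suml; apply: lin_comb_sum => a _.
rewrite tens_qubit_suml; apply: lin_comb_sum => c _.
by rewrite tens_qubitZl; apply/lin_combZ/delta.
Qed.

Lemma jw_span_tens_qubitr n (w : seq ('I_n * bool)) :
  jw_span (tens_qubit 1%:M (jw_word Cf w)).
Proof.
elim: w => [|x w IH] /=; first by rewrite tens_qubit1; apply: jw_span1.
rewrite -[1%:M]mulmx1 -tens_qubit_mul; apply: jw_span_mul => //.
have -> : tens_qubit 1%:M (jw_field Cf x) =
          tens_qubit (sigz Cf) 1%:M *m jw_field Cf (lift ord0 x.1, x.2).
  by rewrite jw_field_lift tens_qubit_mul sigz_sqr mul1mx.
by apply: jw_span_mul; [apply: jw_span_tens_qubitl | apply: jw_span_field].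
Qed.

Lemma jw_span_full n (M : 'M[Cf]_(2 ^ n)) : jw_span M.
Proof.
elim: n M => [|n IH] M.
  by rewrite [M]mx11_scalar -scalemx1; apply/lin_combZ/jw_span1.
have [B ->] := tens_qubit_delta_sum M.
apply: lin_comb_sum => a _; apply: lin_comb_sum => c _.
rewrite -[delta_mx a c]mulmx1 -[B a c]mul1mx -tens_qubit_mul.
apply: jw_span_mul; first exact: jw_span_tens_qubitl.
have [s [_ ->]] := IH (B a c).
rewrite tens_qubit_sumr; apply: lin_comb_sum => p _.
by rewrite tens_qubitZr; apply/lin_combZ/jw_span_tens_qubitr.
Qed.

End FullSpan.

Section FirstModes.
Variables (Cf : numClosedFieldType) (L K : nat).

Definition widen_field (x : 'I_L * bool) : 'I_(L + K) * bool :=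
  (widen_ord (leq_addr K L) x.1, x.2).

Lemma tens_id_mul (A B : 'M[Cf]_(2 ^ L)) : tens_id K (A *m B) = tens_id K A *m tens_id K B.
Proof. by rewrite -castmx_mulmx tensmx_mul mulmx1. Qed.

Lemma tens_id_word w : tens_id K (jw_word Cf w) = jw_word Cf (map widen_field w).
Proof.
elim: w => [|x w IH] /=; first by rewrite /tens_id tensmx1 castmx_scalar.
rewrite tens_id_mul IH; congr (_ *m _).
case: x => i [] /=; rewrite /jw_field /= jw_phi_widen //.
by rewrite /tens_id [in RHS]adjmx_castmx [in RHS]adjmx_tens adjmx1.
Qed.

Lemma lin_comb_tens_id (U : 'M[Cf]_(2 ^ L)) :
  jw_span U -> lin_comb_of (word_on_first L) (tens_id K U).
Proof.
move=> [s [_ ->]]; exists [seq (p.1, map widen_field p.2) | p <- s]; split.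
  rewrite all_map; apply/allP => p _ /=.
  by rewrite /word_on_first all_map; apply/allP => x _ /=.
(* [Cf] must be given: the sum from [lin_comb_of] is taken in the lmodType of matrices. *)
rewrite /tens_id (@tensmx_suml Cf) castmx_sum big_map; apply: eq_bigr => p _.
by rewrite tensmxZl castmxZ -tens_id_word.
Qed.

End FirstModes.

Theorem lemma3 (Cf : numClosedFieldType) (L K : nat) (U : 'M[Cf]_(2 ^ L))
    (JC : 'M[Cf]_(2 ^ (L + K))) :
  fermionic_kraus JC ->
  JC = tens_id K U ->
  lin_comb_of (word_on_first L) JC.
Proof. by move=> _ ->; apply/lin_comb_tens_id/jw_span_full. Qed.
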